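(* For any term $t$, any basis term $b$, any type $T$, any unit types $\vec U=U_1,\dots,U_n$ and any context $\Gamma$ of the Scalar type system: (1) if $\Gamma\vdash t:T$ then $\Gamma[\vec U/\vec X]\vdash t:T[\vec U/\vec X]$; (2) if $\Gamma,x:U\vdash t:T$ and $\Gamma\vdash b:U$ then $\Gamma\vdash t[b/x]:T$.
   Context: Fix a commutative ring $(\mathcal{S},+,\times)$. Terms: $t,r ::= b \mid (t)\,r \mid \mathbf{0} \mid \alpha.t \mid t+r$, basis terms $b ::= x \mid \lambda x\,t$, modulo associativity and commutativity of $+$; $t[b/x]$ is capture-avoiding substitution with $(\alpha.t+\beta.u)[b/x]=\alpha.(t[b/x])+\beta.(u[b/x])$. Types: $T ::= U \mid \forall X.T \mid \alpha.T \mid \overline{0}$; unit types: $U ::= X \mid U\to T \mid \forall X.U$. Type variables are only substituted by unit types; $U[\vec V/\vec X]$ means $U[V_1/X_1]\cdots[V_n/X_n]$, $(\alpha.T)[U/X]=\alpha.T[U/X]$, and $\Gamma[\vec U/\vec X]$ applies the substitution to every type of $\Gamma$. Type equivalence $\equiv$ is the least congruence with $\alpha.\overline0\equiv\overline0$, $0.T\equiv\overline0$, $1.T\equiv T$, $\alpha.(\beta.T)\equiv(\alpha\times\beta).T$, $\forall X.\alpha.T\equiv\alpha.\forall X.T$. A context is a set of distinct term variables with unit types. Typing rules: (ax) $\Gamma,x:U\vdash x:U$; ($\equiv$) from $\Gamma\vdash t:T$ and $T\equiv S$ infer $\Gamma\vdash t:S$; ($\to_E$) from $\Gamma\vdash t:\alpha.(U\to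 T)$ and $\Gamma\vdash r:\beta.U$ infer $\Gamma\vdash (t)\,r:(\alpha\times\beta).T$; ($\to_I$) from $\Gamma,x:U\vdash t:T$ infer $\Gamma\vdash\lambda x\,t:U\to T$; ($\forall_E$) from $\Gamma\vdash t:\forall X.T$ infer $\Gamma\vdash t:T[U/X]$, $U$ unit; ($\forall_I$) from $\Gamma\vdash t:T$ with $X$ not free in $\Gamma$ infer $\Gamma\vdash t:\forall X.T$; ($ax_{\overline0}$) $\Gamma\vdash\mathbf 0:\overline0$; ($+_I$) from $\Gamma\vdash t:\alpha.T$ and $\Gamma\vdash r:\beta.T$ infer $\Gamma\vdash t+r:(\alpha+\beta).T$; ($s_I$) from $\Gamma\vdash t:T$ infer $\Gamma\vdash\alpha.t:\alpha.T$. *)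

(* Scalar type system: terms, types, type equivalence,
   typing rules, and substitutions.  Binders (term lambda, type forall)
   are represented with de Bruijn indices. *)
From mathcomp Require Import all_boot all_algebra.
Set Implicit Arguments.
Unset Strict Implicit.
Unset Printing Implicit Defensive.

Section Scalar.
Variable S : comPzRingType.

(* t,r ::= b | (t) r | 0 | alpha.t | t + r ;  b ::= x | \x t *)
Inductive term : Type :=
| Var  : nat -> term                 (* de Bruijn index *)
| Lam  : term -> term                (* lambda x t, binds index 0 *)
| App  : term -> term -> term
| Zero : term
| Scal : S -> term -> term
| Plus : term -> term -> term.

Definition is_basis (b : term) : Prop :=
  match b with Var _ | Lam _ => True | _ => False end.

(* terms are taken modulo associativity and commutativity of + *)
Inductive ac_eq : term -> term -> Prop :=
| ac_refl t : ac_eq t t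
| ac_sym t r : ac_eq t r -> ac_eq r t
| ac_trans t r s : ac_eq t r -> ac_eq r s -> ac_eq t s
| ac_comm t r : ac_eq (Plus t r) (Plus r t)
| ac_assoc t r s : ac_eq (Plus (Plus t r) s) (Plus t (Plus r s))
| ac_lam t t' : ac_eq t t' -> ac_eq (Lam t) (Lam t')
| ac_app t t' r r' : ac_eq t t' -> ac_eq r r' -> ac_eq (App t r) (App t' r')
| ac_scal a t t' : ac_eq t t' -> ac_eq (Scal a t) (Scal a t')
| ac_plus t t' r r' : ac_eq t t' -> ac_eq r r' -> ac_eq (Plus t r) (Plus t' r').

Fixpoint tm_lift (k : nat) (t : term) : term :=
  match t with
  | Var n => Var (if (n < k)%N then n else n.+1)
  | Lam t => Lam (tm_lift k.+1 t)
  | App t r => App (tm_lift k t) (tm_lift k r)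
  | Zero => Zero
  | Scal a t => Scal a (tm_lift k t)
  | Plus t r => Plus (tm_lift k t) (tm_lift k r)
  end.

(* capture-avoiding substitution of b for the variable of index k
   (the variable is removed from the context, so indices above k decrease) *)
Fixpoint tm_subst (k : nat) (b : term) (t : term) : term :=
  match t with
  | Var n => if (n < k)%N then Var n
             else if n == k then iter k (tm_lift 0) b else Var n.-1
  | Lam t => Lam (tm_subst k.+1 b t)
  | App t r => App (tm_subst k b t) (tm_subst k b r)
  | Zero => Zero
  | Scal a t => Scal a (tm_subst k b t)
  | Plus t r => Plus (tm_subst k b t) (tm_subst k b r)
  end.

(* t[b/x] where x is the most recently bound context variable (index 0) *)
Definition subst_tm (t b : term) : term := tm_subst 0 b t.

Inductive ty : Type :=
| TVar  : nat -> ty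
| TArr  : ty -> ty -> ty
| TAll  : ty -> ty                   (* forall X. T, binds index 0 *)
| TScal : S -> ty -> ty
| TZero : ty.

(* T ::= U | forall X.T | alpha.T | 0 ;  U ::= X | U -> T | forall X.U *)
Fixpoint is_unit (T : ty) : Prop :=
  match T with
  | TVar _ => True
  | TArr U T => is_unit U /\ is_type T
  | TAll U => is_unit U
  | _ => False
  end
with is_type (T : ty) : Prop :=
  match T with
  | TVar _ => True
  | TArr U T => is_unit U /\ is_type T
  | TAll T => is_type T
  | TScal _ T => is_type T
  | TZero => True
  end.

Fixpoint ty_lift (k : nat) (T : ty) : ty :=
  match T with
  | TVar n => TVar (if (n < k)%N then n else n.+1)
  | TArr U T => TArr (ty_lift k U) (ty_lift k T)
  | TAll T => TAll (ty_lift k.+1 T)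
  | TScal a T => TScal a (ty_lift k T)
  | TZero => TZero
  end.

Fixpoint ty_inst (k : nat) (U : ty) (T : ty) : ty :=
  match T with
  | TVar n => if (n < k)%N then TVar n
              else if n == k then iter k (ty_lift 0) U else TVar n.-1
  | TArr V T => TArr (ty_inst k U V) (ty_inst k U T)
  | TAll T => TAll (ty_inst k.+1 U T)
  | TScal a T => TScal a (ty_inst k U T)
  | TZero => TZero
  end.

(* T[U/X] for a body T of forall X.T (X = index 0) *)
Definition open_ty (T U : ty) : ty := ty_inst 0 U T.

(* T[U/X] for a free type variable X (index X), capture-avoiding;
   other free variables are untouched *)
Fixpoint ty_subst (X : nat) (U : ty) (T : ty) : ty :=
  match T with
  | TVar n => if n == X then U else TVar n
  | TArr V T => TArr (ty_subst X U V) (ty_subst X U T)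
  | TAll T => TAll (ty_subst X.+1 (ty_lift 0 U) T)
  | TScal a T => TScal a (ty_subst X U T)
  | TZero => TZero
  end.

(* T[U_1/X_1]...[U_n/X_n], applied left to right *)
Definition ty_substs (XU : seq (nat * ty)) (T : ty) : ty :=
  foldl (fun T p => ty_subst p.1 p.2 T) T XU.

Inductive ty_equiv : ty -> ty -> Prop :=
| te_refl T : is_type T -> ty_equiv T T
| te_sym T R : ty_equiv T R -> ty_equiv R T
| te_trans T R Q : ty_equiv T R -> ty_equiv R Q -> ty_equiv T Q
| te_scal_zero a : ty_equiv (TScal a TZero) TZero
| te_zero_scal T : is_type T -> ty_equiv (TScal 0%R T) TZero
| te_one T : is_type T -> ty_equiv (TScal 1%R T) T
| te_mul a b T : is_type T -> ty_equiv (TScal a (TScal b T)) (TScal (a * b)%R T)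
| te_all_scal a T : is_type T -> ty_equiv (TAll (TScal a T)) (TScal a (TAll T))
| te_arr U U' T T' : is_unit U -> is_unit U' -> ty_equiv U U' -> ty_equiv T T' ->
    ty_equiv (TArr U T) (TArr U' T')
| te_all T T' : ty_equiv T T' -> ty_equiv (TAll T) (TAll T')
| te_scal a T T' : ty_equiv T T' -> ty_equiv (TScal a T) (TScal a T').

(* a context lists the (unit) types of the term variables; index 0 is the
   most recently added variable, so "Gamma, x : U" is U :: Gamma *)
Definition context := seq ty.

Fixpoint lookup (G : context) (n : nat) : option ty :=
  match G, n with
  | [::], _ => None
  | U :: _, 0 => Some U
  | _ :: G, n.+1 => lookup G n
  end.

Definition is_context (G : context) : Prop :=
  forall n U, lookup G n = Some U -> is_unit U.

Fixpoint unit_substs (XU : seq (nat * ty)) : Prop :=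
  match XU with
  | [::] => True
  | p :: XU => is_unit p.2 /\ unit_substs XU
  end.

Inductive typing : context -> term -> ty -> Prop :=
| t_ax G n U : lookup G n = Some U -> typing G (Var n) U
| t_equiv G t T R : typing G t T -> ty_equiv T R -> typing G t R
| t_arrE G t r a b U T :
    typing G t (TScal a (TArr U T)) -> typing G r (TScal b U) ->
    typing G (App t r) (TScal (a * b)%R T)
| t_arrI G t U T : is_unit U -> typing (U :: G) t T -> typing G (Lam t) (TArr U T)
| t_allE G t T U : is_unit U -> typing G t (TAll T) -> typing G t (open_ty T U)
(* X not free in G: G is the shift of a context not mentioning X = index 0 *)
| t_allI G t T : typing (map (ty_lift 0) G) t T -> typing G t (TAll T)
| t_zero G : typing G Zero TZero
| t_plusI G t r a b T : typing G t (TScal a T) -> typing G r (TScal b T) ->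
    typing G (Plus t r) (TScal (a + b)%R T)
| t_scalI G a t T : typing G t T -> typing G (Scal a t) (TScal a T)
| t_ac G t t' T : typing G t T -> ac_eq t t' -> typing G t' T.

End Scalar.

(* For (1), a type
   substitution [U/X] with U unit preserves well-formedness and type
   equivalence, and commutes with the two type operations the rules perform:
   instantiation of a bound variable (forall-elimination) and lifting of the
   context (forall-introduction).  For (2), the substitution is generalised to
   a variable at any depth of the context, which is what the lambda case needs;
   under a term binder the substituted term is weakened, and under a type
   binder its type is lifted, so typing must be stable under type lifting. *)
From mathcomp Require Import all_boot all_algebra.
From mathcomp Require Import zify.
Set Implicit Arguments.
Unset Strict Implicit.
Unset Printing Implicit Defensive.

Section TypeSubstitution.
Variable S : comPzRingType.
Implicit Types (T U V W : ty S) (G D : context S) (t b : term S).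

Lemma is_unit_type U : is_unit U -> is_type U.
Proof. by elim: U. Qed.

Lemma ty_lift_wf T j :
  (is_unit T -> is_unit (ty_lift j T)) /\ (is_type T -> is_type (ty_lift j T)).
Proof.
elim: T j => [n|U IHU T IHT|T IHT|a T IHT|] j //=.
- by have [? ?] := IHU j; have [? ?] := IHT j; split=> -[] *; split; auto.
- by have [_ ?] := IHT j.
Qed.

Lemma is_unit_lift T j : is_unit T -> is_unit (ty_lift j T).
Proof. exact: (ty_lift_wf T j).1. Qed.

Lemma is_type_lift T j : is_type T -> is_type (ty_lift j T).
Proof. exact: (ty_lift_wf T j).2. Qed.

Lemma ty_subst_wf T X U : is_unit U ->
  (is_unit T -> is_unit (ty_subst X U T)) /\ (is_type T -> is_type (ty_subst X U T)).
Proof.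
elim: T X U => [n|V IHV T IHT|T IHT|a T IHT|] X U hU //=.
- by case: eqP => _; split=> // _; apply: is_unit_type.
- by have [? ?] := IHV X U hU; have [? ?] := IHT X U hU; split=> -[] *; split; auto.
- exact: IHT (is_unit_lift 0 hU).
- by have [_ ?] := IHT X U hU.
Qed.

Lemma is_unit_subst T X U : is_unit U -> is_unit T -> is_unit (ty_subst X U T).
Proof. by move=> hU; have [] := ty_subst_wf T X hU. Qed.

Lemma is_type_subst T X U : is_unit U -> is_type T -> is_type (ty_subst X U T).
Proof. by move=> hU; have [] := ty_subst_wf T X hU. Qed.

Lemma ty_lift_lift T i j : (i <= j)%N ->
  ty_lift j.+1 (ty_lift i T) = ty_lift i (ty_lift j T).
Proof.
elim: T i j => [n|U IHU T IHT|T IHT|a T IHT|] i j hij /=.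
- by congr TVar; repeat case: ifP => /=; lia.
- by rewrite IHU // IHT.
- by rewrite IHT.
- by rewrite IHT.
- by [].
Qed.

Lemma iter_lift0_lift V j k :
  iter k (ty_lift 0) (ty_lift j V) = ty_lift (j + k) (iter k (ty_lift 0) V).
Proof. by elim: k => [|k /= ->]; rewrite ?addn0 // addnS ty_lift_lift. Qed.

Lemma iter_lift0S U k : iter k.+1 (ty_lift 0) U = ty_lift k (iter k (ty_lift 0) U).
Proof. by rewrite iterSr iter_lift0_lift. Qed.

Lemma ty_liftK k W : cancel (ty_lift k) (@ty_inst S k W).
Proof.
move=> T; elim: T k => [n|U IHU T IHT|T IHT|a T IHT|] k /=.
- by case: (ltnP n k) => h /=; [rewrite h | repeat case: ifP => //=; lia].
- by rewrite IHU IHT.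
- by rewrite IHT.
- by rewrite IHT.
- by [].
Qed.

Lemma ty_lift_inst T V j k :
  ty_lift (j + k) (ty_inst k V T) = ty_inst k (ty_lift j V) (ty_lift (j + k).+1 T).
Proof.
elim: T j k => [n|U IHU T IHT|T IHT|a T IHT|] j k /=.
- case: (ltngtP n k) => [h|h|<-].
  + have -> : (n < (j + k).+1)%N by lia.
    by rewrite /= h; case: ifP => //=; lia.
  + by repeat case: ifP => //=; move=> *; try congr TVar; lia.
  + have -> : (n < (j + n).+1)%N by lia.
    by rewrite ltnn eqxx iter_lift0_lift.
- by rewrite IHU IHT.
- by rewrite -addnS IHT addnS.
- by rewrite IHT.
- by [].
Qed.

Lemma ty_lift_open T V j :
  ty_lift j (open_ty T V) = open_ty (ty_lift j.+1 T) (ty_lift j V).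
Proof. by have := ty_lift_inst T V j 0; rewrite addn0. Qed.

Lemma ty_subst_lift V U X j :
  ty_subst (if (X < j)%N then X else X.+1) (ty_lift j U) (ty_lift j V)
  = ty_lift j (ty_subst X U V).
Proof.
elim: V U X j => [n|W IHW T IHT|T IHT|a T IHT|] U X j /=.
- case: (eqVneq n X) => [->|ne]; rewrite ?eqxx //= ifN_eq //.
  by move: ne; do 2 case: ifP; lia.
- by rewrite IHW IHT.
- by rewrite -IHT ltnS ty_lift_lift //; case: ifP.
- by rewrite IHT.
- by [].
Qed.

Lemma ty_subst_lift0 V U X :
  ty_subst X.+1 (ty_lift 0 U) (ty_lift 0 V) = ty_lift 0 (ty_subst X U V).
Proof. by rewrite -ty_subst_lift. Qed.

Lemma ty_subst_iter_lift0 V U X k :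
  ty_subst (X + k) (iter k (ty_lift 0) U) (iter k (ty_lift 0) V)
  = iter k (ty_lift 0) (ty_subst X U V).
Proof. by elim: k => [|k /= <-]; rewrite ?addn0 // addnS ty_subst_lift0. Qed.

Lemma ty_subst_inst T V U X k :
  ty_inst k (ty_subst X U V) (ty_subst (X + k).+1 (iter k.+1 (ty_lift 0) U) T)
  = ty_subst (X + k) (iter k (ty_lift 0) U) (ty_inst k V T).
Proof.
elim: T X k => [n|W IHW T IHT|T IHT|a T IHT|] X k /=.
- case: eqP => [->|ne].
  + rewrite -[ty_lift 0 _]/(iter k.+1 (ty_lift 0) U) iter_lift0S ty_liftK.
    by do 2 (case: ifP => /=; first lia); rewrite eqxx.
  + case: (ltngtP n k) => [h|h|<-] /=; rewrite ?ltnn ?eqxx ?ty_subst_iter_lift0 //;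
      by repeat case: ifP => //=; move=> *; exfalso; lia.
- by rewrite IHW IHT.
- by rewrite -addnS IHT addnS.
- by rewrite IHT.
- by [].
Qed.

Lemma ty_subst_open T V U X :
  open_ty (ty_subst X.+1 (ty_lift 0 U) T) (ty_subst X U V)
  = ty_subst X U (open_ty T V).
Proof. by have := ty_subst_inst T V U X 0; rewrite addn0. Qed.

Lemma ty_equiv_lift T W j : ty_equiv T W -> ty_equiv (ty_lift j T) (ty_lift j W).
Proof.
move=> hTW; elim: hTW j => {T W} /=.
- by move=> T hT j; apply/te_refl/is_type_lift.
- by move=> T W _ IH j; apply: te_sym.
- by move=> T W Q _ IH1 _ IH2 j; apply: te_trans (IH1 j) (IH2 j).
- by move=> a j; apply: te_scal_zero.
- by move=> T hT j; apply/te_zero_scal/is_type_lift.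
- by move=> T hT j; apply/te_one/is_type_lift.
- by move=> a c T hT j; apply/te_mul/is_type_lift.
- by move=> a T hT j; apply/te_all_scal/is_type_lift.
- move=> U U' T T' hU hU' _ IH1 _ IH2 j.
  exact: te_arr (is_unit_lift j hU) (is_unit_lift j hU') (IH1 j) (IH2 j).
- by move=> T T' _ IH j; apply: te_all.
- by move=> a T T' _ IH j; apply: te_scal.
Qed.

Lemma ty_equiv_subst T W X U : is_unit U ->
  ty_equiv T W -> ty_equiv (ty_subst X U T) (ty_subst X U W).
Proof.
move=> hU hTW; elim: hTW X U hU => {T W} /=.
- by move=> T hT X U hU; apply/te_refl/is_type_subst.
- by move=> T W _ IH X U hU; apply/te_sym/IH.
- by move=> T W Q _ IH1 _ IH2 X U hU; apply: te_trans (IH1 X U hU) (IH2 X U hU).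
- by move=> a X U hU; apply: te_scal_zero.
- by move=> T hT X U hU; apply/te_zero_scal/is_type_subst.
- by move=> T hT X U hU; apply/te_one/is_type_subst.
- by move=> a c T hT X U hU; apply/te_mul/is_type_subst.
- by move=> a T hT X U hU; apply/te_all_scal/is_type_subst => //; apply: is_unit_lift.
- move=> V V' T T' hV hV' _ IH1 _ IH2 X U hU.
  exact: te_arr (is_unit_subst X hU hV) (is_unit_subst X hU hV') (IH1 X U hU) (IH2 X U hU).
- by move=> T T' _ IH X U hU; apply/te_all/IH/is_unit_lift.
- by move=> a T T' _ IH X U hU; apply/te_scal/IH.
Qed.

Lemma lookup_map (f : ty S -> ty S) G n : lookup (map f G) n = omap f (lookup G n).
Proof. by elim: G n => [|V G IH] []. Qed.

Lemma typing_lift G t T j :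
  typing G t T -> typing (map (ty_lift j) G) t (ty_lift j T).
Proof.
move=> hT; elim: hT j => {G t T}.
- by move=> G n U h j; apply: t_ax; rewrite lookup_map h.
- by move=> G t T W _ IH hTW j; apply: t_equiv (IH j) (ty_equiv_lift j hTW).
- by move=> G t r a c U T _ IH1 _ IH2 j; apply: t_arrE (IH1 j) (IH2 j).
- by move=> G t U T hU _ IH j; apply: t_arrI (is_unit_lift j hU) (IH j).
- move=> G t T U hU _ IH j.
  by rewrite ty_lift_open; apply: t_allE (is_unit_lift j hU) (IH j).
- move=> G t T _ IH j; apply: t_allI.
  have liftC : ty_lift j.+1 \o ty_lift 0 =1 ty_lift 0 \o @ty_lift S j.
    by move=> V /=; rewrite ty_lift_lift.
  by have := IH j.+1; rewrite -map_comp (eq_map liftC) map_comp.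
- by move=> G j; apply: t_zero.
- by move=> G t r a c T _ IH1 _ IH2 j; apply: t_plusI (IH1 j) (IH2 j).
- by move=> G a t T _ IH j; apply: t_scalI (IH j).
- by move=> G t t' T _ IH hac j; apply: t_ac (IH j) hac.
Qed.

Lemma typing_subst G t T X U : is_unit U ->
  typing G t T -> typing (map (ty_subst X U) G) t (ty_subst X U T).
Proof.
move=> hU hT; elim: hT X U hU => {G t T}.
- by move=> G n V h X U hU; apply: t_ax; rewrite lookup_map h.
- move=> G t T W _ IH hTW X U hU.
  exact: t_equiv (IH X U hU) (ty_equiv_subst X hU hTW).
- by move=> G t r a c V T _ IH1 _ IH2 X U hU; apply: t_arrE (IH1 X U hU) (IH2 X U hU).
- move=> G t V T hV _ IH X U hU.
  exact: t_arrI (is_unit_subst X hU hV) (IH X U hU).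
- move=> G t T V hV _ IH X U hU.
  by rewrite -ty_subst_open; apply: t_allE (is_unit_subst X hU hV) (IH X U hU).
- move=> G t T _ IH X U hU; apply: t_allI.
  have substC : ty_subst X.+1 (ty_lift 0 U) \o ty_lift 0 =1 ty_lift 0 \o ty_subst X U.
    by move=> V /=; rewrite ty_subst_lift0.
  have := IH X.+1 _ (is_unit_lift 0 hU).
  by rewrite -map_comp (eq_map substC) map_comp.
- by move=> G X U hU; apply: t_zero.
- by move=> G t r a c T _ IH1 _ IH2 X U hU; apply: t_plusI (IH1 X U hU) (IH2 X U hU).
- by move=> G a t T _ IH X U hU; apply: t_scalI (IH X U hU).
- by move=> G t t' T _ IH hac X U hU; apply: t_ac (IH X U hU) hac.
Qed.

Lemma typing_substs XU G t T : unit_substs XU ->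
  typing G t T -> typing (map (ty_substs XU) G) t (ty_substs XU T).
Proof.
elim: XU G T => [|[X U] XU IH] G T /=.
  by rewrite (@eq_map _ _ (ty_substs [::]) id) // map_id.
by move=> [hU hXU] /(typing_subst X hU) /(IH _ _ hXU); rewrite -map_comp.
Qed.

End TypeSubstitution.

Section TermSubstitution.
Variable S : comPzRingType.
Implicit Types (T U V : ty S) (G D : context S) (t b : term S).

Lemma ac_eq_lift t t' k : ac_eq t t' -> ac_eq (tm_lift k t) (tm_lift k t').
Proof.
move=> h; elim: h k => {t t'} /=; intros; try by constructor; auto.
exact: ac_trans.
Qed.

Lemma ac_eq_subst t t' k b : ac_eq t t' -> ac_eq (tm_subst k b t) (tm_subst k b t').
Proof.
move=> h; elim: h k => {t t'} /=; intros; try by constructor; auto.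
exact: ac_trans.
Qed.

Lemma lookup_cat D G n :
  lookup (D ++ G) n = if (n < size D)%N then lookup D n else lookup G (n - size D).
Proof. by elim: D n => [|V D IH] [|n] //=; rewrite IH. Qed.

Lemma typing_weaken D G V t T :
  typing (D ++ G) t T -> typing (D ++ V :: G) (tm_lift (size D) t) T.
Proof.
move E: (D ++ G) => DG h; elim: h D G V E => {DG t T}.
- move=> DG n U h D G V E; subst DG; apply: t_ax; move: h; rewrite !lookup_cat /=.
  case: (ltnP n (size D)) => [lt|ge]; first by rewrite lt.
  by rewrite ifN ?subSn //; lia.
- by move=> DG t T W _ IH hTW D G V E; apply: t_equiv (IH D G V E) hTW.
- by move=> DG t r a c U T _ IH1 _ IH2 D G V E; apply: t_arrE (IH1 D G V E) (IH2 D G V E).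
- by move=> DG t U T hU _ IH D G V E; apply: t_arrI hU (IH (U :: D) G V (congr1 (cons U) E)).
- by move=> DG t T U hU _ IH D G V E; apply: t_allE (IH D G V E).
- move=> DG t T _ IH D G V E; apply: t_allI.
  by rewrite map_cat -(size_map (ty_lift 0) D); apply: IH; rewrite -E map_cat.
- by move=> *; apply: t_zero.
- by move=> DG t r a c T _ IH1 _ IH2 D G V E; apply: t_plusI (IH1 D G V E) (IH2 D G V E).
- by move=> DG a t T _ IH D G V E; apply: t_scalI (IH D G V E).
- by move=> DG t t' T _ IH hac D G V E; apply: t_ac (IH D G V E) (ac_eq_lift _ hac).
Qed.

Lemma typing_iter_lift0 D G b U :
  typing G b U -> typing (D ++ G) (iter (size D) (tm_lift 0) b) U.
Proof. by elim: D => [|V D IH] //= /IH /(@typing_weaken [::] _ V). Qed.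

Lemma typing_tm_subst D U G t b T :
  typing (D ++ U :: G) t T -> typing G b U ->
  typing (D ++ G) (tm_subst (size D) b t) T.
Proof.
move E: (D ++ U :: G) => DUG h; elim: h D U G b E => {DUG t T}.
- move=> DUG n V + D U G b E hb; subst DUG; rewrite lookup_cat /=.
  case: (ltngtP n (size D)) => [lt|gt|->].
  + by move=> h; apply: t_ax; rewrite lookup_cat lt.
  + have -> : (n - size D = (n.-1 - size D).+1)%N by lia.
    by move=> h; apply: t_ax; rewrite lookup_cat ifN //; lia.
  + by rewrite subnn => -[<-]; apply: typing_iter_lift0.
- by move=> DUG t T W _ IH hTW D U G b E hb; apply: t_equiv (IH D U G b E hb) hTW.
- move=> DUG t r a c V T _ IH1 _ IH2 D U G b E hb.
  exact: t_arrE (IH1 D U G b E hb) (IH2 D U G b E hb).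
- move=> DUG t V T hV _ IH D U G b E hb.
  exact: t_arrI hV (IH (V :: D) U G b (congr1 (cons V) E) hb).
- by move=> DUG t T V hV _ IH D U G b E hb; apply: t_allE (IH D U G b E hb).
- move=> DUG t T _ IH D U G b E hb; apply: t_allI.
  rewrite map_cat -(size_map (ty_lift 0) D).
  by apply: (IH _ _ _ _ _ (typing_lift 0 hb)); rewrite -E map_cat.
- by move=> *; apply: t_zero.
- move=> DUG t r a c T _ IH1 _ IH2 D U G b E hb.
  exact: t_plusI (IH1 D U G b E hb) (IH2 D U G b E hb).
- by move=> DUG a t T _ IH D U G b E hb; apply: t_scalI (IH D U G b E hb).
- by move=> DUG t t' T _ IH hac D U G b E hb; apply: t_ac (IH D U G b E hb) (ac_eq_subst _ _ hac).
Qed.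

End TermSubstitution.

Theorem mainTheorem7 (S : comPzRingType) (t b : term S) (T : ty S)
    (XU : seq (nat * ty S)) (G : context S) :
  (is_context G -> is_type T -> unit_substs XU ->
   typing G t T ->
   typing (map (ty_substs XU) G) t (ty_substs XU T))
  /\
  (forall U : ty S, is_context G -> is_unit U -> is_type T -> is_basis b ->
   typing (U :: G) t T -> typing G b U ->
   typing G (subst_tm t b) T).
Proof.
split=> [_ _|U _ _ _ _]; first exact: typing_substs.
exact: (@typing_tm_subst S [::]).
Qed.
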